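(* Let $\rho_\lambda$ satisfy Condition (R), let $m\ge1$, $A\subset[m]$ and $\xi>0$. Then $$\mathcal{C}^m_\rho(A,\xi)\subset\bigcup_{A'\subset[m],\ |A'|=|A|}\mathcal{C}^m_1(A',\xi).$$
   Context: $\rho_\lambda(u)=\sum_i\rho_\lambda(|u_i|)$ for $u\in\mathbb{R}^m$; $u_A$ denotes $u$ restricted to the coordinates in $A$. $\mathcal{C}^m_\rho(A,\xi)=\{u\in\mathbb{R}^m:\rho_\lambda(u_{A^c})\le\xi\rho_\lambda(u_A)\}$ and $\mathcal{C}^m_1(A,\xi)=\{u\in\mathbb{R}^m:\|u_{A^c}\|_1\le\xi\|u_A\|_1\}$. Condition (R): $\rho_\lambda:[0,\infty)\to[0,\infty)$ is concave, nondecreasing, right-differentiable at $0$, $\rho_\lambda(0)=0$, $0<\rho_\lambda'(0^+)<\infty$, and there are constants $a,b\ge0$ independent of $\lambda$ with $\rho_\lambda(x)\ge\min\{a\lambda x,b\lambda^2\}$. *)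

From HB Require Import structures.
From mathcomp Require Import all_boot all_order all_algebra.
From mathcomp Require Import all_classical all_reals all_analysis.
Set Implicit Arguments. Unset Strict Implicit. Unset Printing Implicit Defensive.
Import Order.TTheory GRing.Theory Num.Theory.
Import numFieldNormedType.Exports.
Local Open Scope classical_set_scope.
Local Open Scope ring_scope.

(* Condition (R) for a penalty rho_lambda : [0,oo) -> [0,oo), modelled as a
   function R -> R whose properties are only required on [0,oo). *)
Definition condR (R : realType) (lambda : R) (rho : R -> R) : Prop :=
  (forall x, 0 <= x -> 0 <= rho x) /\
  (forall x y t, 0 <= x -> 0 <= y -> 0 <= t -> t <= 1 ->
      t * rho x + (1 - t) * rho y <= rho (t * x + (1 - t) * y)) /\
  (forall x y, 0 <= x -> x <= y -> rho x <= rho y) /\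
  rho 0 = 0 /\
  (exists d : R, 0 < d /\
      (fun h => (rho h - rho 0) / h) @ at_right (0 : R) --> d) /\
  (exists a b : R, 0 <= a /\ 0 <= b /\
      forall x, 0 <= x -> Num.min (a * lambda * x) (b * lambda ^+ 2) <= rho x).

Definition rho_sum (R : realType) (m : nat) (rho : R -> R)
    (S : {set 'I_m}) (u : 'rV[R]_m) : R :=
  \sum_(i in S) rho `|u ord0 i|.

Definition l1_sum (R : realType) (m : nat) (S : {set 'I_m}) (u : 'rV[R]_m) : R :=
  \sum_(i in S) `|u ord0 i|.

Definition cone_rho (R : realType) (m : nat) (rho : R -> R)
    (A : {set 'I_m}) (xi : R) : set 'rV[R]_m :=
  [set u | rho_sum rho (~: A) u <= xi * rho_sum rho A u].

Definition cone_l1 (R : realType) (m : nat)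
    (A : {set 'I_m}) (xi : R) : set 'rV[R]_m :=
  [set u | l1_sum (~: A) u <= xi * l1_sum A u].

From HB Require Import structures.
From mathcomp Require Import all_boot all_order all_algebra.
From mathcomp Require Import all_classical all_reals all_analysis.
Set Implicit Arguments. Unset Strict Implicit. Unset Printing Implicit Defensive.
Import Order.TTheory GRing.Theory Num.Theory.
Import numFieldNormedType.Exports.
Local Open Scope classical_set_scope.
Local Open Scope ring_scope.

(* Let A' collect the |A| largest coordinates of |u| and let t separate them
   from the rest.  Moving to A' can only increase rho_sum on the support and
   decrease it off the support, so u stays in C_rho(A', xi).  Concavity with
   rho 0 = 0 makes rho(x)/x nonincreasing, so rho(x) >= x rho(t)/t below t and
   rho(x) <= x rho(t)/t above t; hence rho(t)/t ||u_{A'^c}||_1 <= rho_sum over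
   A'^c <= xi rho_sum over A' <= xi rho(t)/t ||u_{A'}||_1, and rho(t) > 0
   because rho'(0+) > 0. *)

Section Threshold.
Variables (T : finType) (R : realDomainType).
Implicit Types (f : T -> R) (A S : {set T}) (t : R).

Definition threshold_set f S t :=
  (forall j, j \notin S -> f j <= t) /\ (forall i, i \in S -> t <= f i).

Lemma exists_threshold_set f A :
  exists S, #|S| = #|A| /\ exists t, threshold_set f S t.
Proof.
pose P S := #|S| == #|A|.
have [S /eqP cardS S_max] := @arg_maxP _ _ _ A P (fun S => \sum_(i in S) f i) (eqxx _).
have swap i j : i \in S -> j \notin S -> f j <= f i.
  move=> iS jS; have jSi : j \notin S :\ i by rewrite !inE negb_and jS orbT.
  have /S_max : P (j |: (S :\ i)).
    by rewrite /P cardsU1 jSi -cardS (cardsD1 i S) iS.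
  by rewrite big_setU1 //= (big_setD1 _ iS) /= lerD2r.
exists S; split=> //.
have [S0 | [i0 i0S]] := set_0Vmem S.
  exists (\sum_i `|f i|); split=> [j _|i]; last by rewrite S0 inE.
  by rewrite (le_trans (ler_norm _)) // (bigD1 j) //= lerDl sumr_ge0.
have [i1 i1S i1_min] := @arg_minP _ _ _ i0 [pred i | i \in S] f i0S.
by exists (f i1); split=> [j|i]; [exact: swap | exact: i1_min].
Qed.

Lemma ler_sum_threshold_set f A S t : #|A| = #|S| -> threshold_set f S t ->
  \sum_(i in A) f i <= \sum_(i in S) f i.
Proof.
move=> cardAS [f_out f_in].
rewrite (big_setID S) [X in _ <= X](big_setID A) finset.setIC lerD2l.
have cardD : #|A :\: S| = #|S :\: A|.
  by apply/eqP; rewrite -(eqn_add2l #|A :&: S|) cardsID finset.setIC cardsID cardAS.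
apply: (@le_trans _ _ (\sum_(i in A :\: S) t)).
  by apply: ler_sum => j; rewrite inE => /andP[/f_out].
rewrite sumr_const cardD -sumr_const.
by apply: ler_sum => i; rewrite inE => /andP[_ /f_in].
Qed.

Lemma ler_sum_setC_threshold_set f A S t : #|A| = #|S| -> threshold_set f S t ->
  \sum_(i in ~: S) f i <= \sum_(i in ~: A) f i.
Proof.
move=> cardAS fS; have total B : \sum_(i in ~: B) f i = \sum_i f i - \sum_(i in B) f i.
  by rewrite [\sum_i f i](bigID (mem B)) /= addrAC subrr add0r; apply: eq_bigl => i; rewrite inE.
by rewrite !total lerD2l lerN2 (ler_sum_threshold_set cardAS fS).
Qed.

End Threshold.

Section ConcavePenalty.
Variables (R : realFieldType) (rho : R -> R).
Implicit Types x y s : R.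
Hypothesis rho0 : rho 0 = 0.
Hypothesis rho_concave : forall x y s, 0 <= x -> 0 <= y -> 0 <= s -> s <= 1 ->
  s * rho x + (1 - s) * rho y <= rho (s * x + (1 - s) * y).

Lemma concave_chord_le x y : 0 <= x -> x <= y -> 0 < y -> x * rho y <= y * rho x.
Proof.
move=> x0 xy y0; have y_neq0 : y != 0 by rewrite gt_eqF.
have := rho_concave (ltW y0) (lexx 0) (divr_ge0 x0 (ltW y0)).
rewrite ler_pdivrMr // mul1r rho0 mulr0 !addr0 divfK // => /(_ xy) rho_x.
by rewrite -{1}(divfK y_neq0 x) mulrAC mulrC ler_pM2l.
Qed.

Lemma sum_concave_chord_le (I : finType) (S : {set I}) (f : I -> R) t :
  0 < t -> (forall i, i \in S -> 0 <= f i <= t) ->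
  rho t * \sum_(i in S) f i <= t * \sum_(i in S) rho (f i).
Proof.
move=> t0 f_le; rewrite !mulr_sumr; apply: ler_sum => i /f_le /andP[fi0 fit].
by rewrite mulrC concave_chord_le.
Qed.

Lemma sum_concave_chord_ge (I : finType) (S : {set I}) (f : I -> R) t :
  0 < t -> (forall i, i \in S -> t <= f i) ->
  t * \sum_(i in S) rho (f i) <= rho t * \sum_(i in S) f i.
Proof.
move=> t0 f_ge; rewrite !mulr_sumr; apply: ler_sum => i /f_ge tfi.
by rewrite [X in _ <= X]mulrC concave_chord_le ?(ltW t0) ?(lt_le_trans t0 tfi).
Qed.

End ConcavePenalty.

Lemma rho_gt0 (R : realType) (rho : R -> R) (d t : R) :
  (forall x y, 0 <= x -> x <= y -> rho x <= rho y) -> rho 0 = 0 ->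
  0 < d -> (fun h => (rho h - rho 0) / h) @ at_right (0 : R) --> d ->
  0 < t -> 0 < rho t.
Proof.
move=> rho_mono rho0 d0 slope t0.
have rho_ge0 x : 0 <= x -> 0 <= rho x by move=> x0; have := rho_mono _ _ (lexx 0) x0; rewrite rho0.
rewrite lt_def rho_ge0 ?ltW // andbT; apply/eqP => rho_t.
have d2 : d / 2 < d by rewrite ltr_pdivrMr // ltr_pMr // ltr1n.
have [h [[slope_h h0] ht]] := @filter_ex _ _ (at_right_proper_filter 0) _
  (filterI (filterI (cvgr_gt _ slope _ d2) (@nbhs_right_gt R 0)) (nbhs_right_lt t0)).
have rho_h : rho h = 0.
  apply/le_anti; rewrite rho_ge0 ?(ltW h0) // andbT -rho_t.
  exact: rho_mono (ltW h0) (ltW ht).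
by move: slope_h; rewrite rho_h rho0 subrr mul0r ltNge divr_ge0 ?ltW.
Qed.

Theorem lemma12 (R : realType) (lambda : R) (rho : R -> R) (m : nat)
    (A : {set 'I_m}) (xi : R) :
  condR lambda rho -> (0 < m)%N -> 0 < xi ->
  cone_rho rho A xi `<=`
    \bigcup_(A' in [set A' : {set 'I_m} | #|A'| = #|A|]) cone_l1 A' xi.
Proof.
move=> [_ [rho_concave [rho_mono [rho0 [[d [d0 slope]] _]]]]] _ xi0 u u_cone.
have [A' [cardA' [t thr]]] := exists_threshold_set (fun i => `|u ord0 i|) A.
exists A' => //; rewrite /cone_l1 /=; have [u_out u_in] := thr.
have [t_le0 | t_gt0] := leP t 0.
  rewrite [l1_sum _ _]big1 ?mulr_ge0 ?sumr_ge0 ?ltW // => j /[!inE] /u_out ujt.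
  by apply/le_anti; rewrite normr_ge0 andbT (le_trans ujt).
have rho_thr : threshold_set (fun i => rho `|u ord0 i|) A' (rho t).
  split=> [j /u_out ujt | i /u_in tui]; first exact: rho_mono (normr_ge0 _) ujt.
  exact: rho_mono (ltW t_gt0) tui.
have u_cone' : rho_sum rho (~: A') u <= xi * rho_sum rho A' u.
  apply: le_trans (ler_sum_setC_threshold_set (esym cardA') rho_thr) _.
  apply: le_trans u_cone _; rewrite ler_pM2l //.
  exact: ler_sum_threshold_set (esym cardA') rho_thr.
rewrite -(ler_pM2l (rho_gt0 rho_mono rho0 d0 slope t_gt0)) mulrCA.
have u_out' j : j \in ~: A' -> 0 <= `|u ord0 j| <= t.
  by move=> /[!inE] /u_out ->; rewrite normr_ge0.
apply: le_trans (sum_concave_chord_le rho0 rho_concave t_gt0 u_out') _.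
apply: le_trans (ler_wpM2l (ltW t_gt0) u_cone') _.
rewrite [leLHS]mulrCA ler_pM2l //.
exact: (sum_concave_chord_ge (f := fun i => `|u ord0 i|) rho0 rho_concave t_gt0 u_in).
Qed.
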